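(* Let $(\Omega(\mathcal{A}),d)$ be a differential calculus on a complex algebra $\mathcal{A}$ with $\mathcal{E}=\Omega^1(\mathcal{A})$ a finitely generated projective right $\mathcal{A}$-module satisfying: (1) $\mathcal{E}=\mathcal{Z}(\mathcal{E})\otimes_{\mathcal{Z}(\mathcal{A})}\mathcal{A}$; (2) $\mathcal{E}\otimes_{\mathcal{A}}\mathcal{E}=\ker(\wedge)\oplus\mathcal{F}$ with $\mathcal{F}$ a right submodule and $Q=\wedge|_{\mathcal{F}}:\mathcal{F}\to\Omega^2(\mathcal{A})$ a right $\mathcal{A}$-linear isomorphism; (3) $\sigma(\omega\otimes_{\mathcal{A}}\eta)=\eta\otimes_{\mathcal{A}}\omega$ for all $\omega,\eta\in\mathcal{Z}(\mathcal{E})$. Let $\nabla_0$ be as in the context. Then: (a) if $\omega\in\mathcal{Z}(\mathcal{E})$ then $d\omega\in\mathcal{Z}(\Omega^2(\mathcal{A}))$; (b) if $\omega\in\mathcal{Z}(\mathcal{E})$ then $(1-\sigma)\nabla_0(\omega)\in\mathcal{Z}(\mathcal{E}\otimes_{\mathcal{A}}\mathcal{E})$.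
   Context: A differential calculus: $\Omega(\mathcal{A})=\oplus_{j\ge0}\Omega^j(\mathcal{A})$, $\Omega^0=\mathcal{A}$, bimodules $\Omega^j$, an $\mathcal{A}$-bimodule product $\wedge$ adding degrees, $d$ of degree one with $d^2=0$ and $d(\omega\wedge\eta)=d\omega\wedge\eta+(-1)^{\deg\omega}\omega\wedge d\eta$, $\Omega^j$ right-spanned by $da_0\wedge\cdots\wedge da_{j-1}$. $\wedge:\mathcal{E}\otimes_{\mathcal{A}}\mathcal{E}\to\Omega^2(\mathcal{A})$ is the induced product; $P_{\rm sym}$ the idempotent with image $\ker\wedge$ and kernel $\mathcal{F}$; $\sigma=2P_{\rm sym}-1$. $\mathcal{Z}(\mathcal{M})=\{m:am=ma\ \forall a\in\mathcal{A}\}$ for a bimodule $\mathcal{M}$. A connection is a $\mathbb{C}$-linear $\nabla:\mathcal{E}\to\mathcal{E}\otimes_{\mathcal{A}}\mathcal{E}$ with $\nabla(\omega a)=\nabla(\omega)a+\omega\otimes_{\mathcal{A}}da$. With an idempotent $p\in M_n(\mathcal{A})$, $p(\mathcal{A}^n)=\mathcal{E}$, $\Phi_j=p(e_j)$, the Grassmann connection is $\nabla^{Gr}(\sum_j\Phi_ja_j)=\sum_j\Phi_j\otimes_{\mathcal{A}}da_j$, and $\nabla_0:=\nabla^{Gr}-Q^{-1}\circ(\wedge\circ\nabla^{Gr}+d)$, a connection with $\wedge\circ\nabla_0+d=0$. *)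

From mathcomp Require Import all_boot all_algebra.
From mathcomp Require Import complex Rstruct.
Set Implicit Arguments. Unset Strict Implicit. Unset Printing Implicit Defensive.
Import GRing.Theory.
Local Open Scope ring_scope.

Notation CC := (Rdefinitions.R[i]).

Section Defs.
Variable A : algType CC.

Definition is_bimodule (M : lmodType CC) (la : A -> M -> M) (ra : M -> A -> M)
  : Prop :=
  [/\ (forall m, la 1 m = m) /\ (forall m, ra m 1 = m),
      (forall a b m, la (a * b) m = la a (la b m)) /\
      (forall a b m, ra m (a * b) = ra (ra m a) b),
      (forall a b m, la (a + b) m = la a m + la b m) /\
      (forall a m n, la a (m + n) = la a m + la a n) /\
      (forall a b m, ra m (a + b) = ra m a + ra m b) /\
      (forall a m n, ra (m + n) a = ra m a + ra n a),
      (forall (c : CC) a m, la (c *: a) m = c *: la a m) /\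
      (forall (c : CC) a m, la a (c *: m) = c *: la a m) /\
      (forall (c : CC) a m, ra m (c *: a) = c *: ra m a) /\
      (forall (c : CC) a m, ra (c *: m) a = c *: ra m a)
    & forall a b m, la a (ra m b) = ra (la a m) b].

Definition central (M : Type) (la : A -> M -> M) (ra : M -> A -> M) (m : M)
  : Prop := forall a : A, la a m = ra m a.

Definition centralA (c : A) : Prop := forall a : A, a * c = c * a.

(* A differential calculus, recorded in degrees 0, 1, 2:
   Omega^0 = A, Omega^1 = O1, Omega^2 = O2, d : A -> O1, d : O1 -> O2,
   and the product wedge : O1 x O1 -> O2 (products with Omega^0 are the
   bimodule actions). *)
Record calc2 := Calc2 {
  O1 : lmodType CC;
  l1 : A -> O1 -> O1;
  r1 : O1 -> A -> O1;
  O2 : lmodType CC;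
  l2 : A -> O2 -> O2;
  r2 : O2 -> A -> O2;
  d0 : A -> O1;
  d1 : O1 -> O2;
  wedge : O1 -> O1 -> O2 }.
Arguments l1 : clear implicits. Arguments r1 : clear implicits.
Arguments l2 : clear implicits. Arguments r2 : clear implicits.
Arguments d0 : clear implicits. Arguments d1 : clear implicits.
Arguments wedge : clear implicits.

Definition is_calc2 (Om : calc2) : Prop :=
  [/\ is_bimodule (l1 Om) (r1 Om) /\ is_bimodule (l2 Om) (r2 Om),
      ((forall w w' v, wedge Om (w + w') v = wedge Om w v + wedge Om w' v) /\
       (forall w v v', wedge Om w (v + v') = wedge Om w v + wedge Om w v') /\
       (forall (c : CC) w v, wedge Om (c *: w) v = c *: wedge Om w v) /\
       (forall (c : CC) w v, wedge Om w (c *: v) = c *: wedge Om w v) /\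
       (forall a w v, wedge Om (l1 Om a w) v = l2 Om a (wedge Om w v)) /\
       (forall a w v, wedge Om (r1 Om w a) v = wedge Om w (l1 Om a v)) /\
       (forall a w v, wedge Om w (r1 Om v a) = r2 Om (wedge Om w v) a)),
      ((forall a b, d0 Om (a + b) = d0 Om a + d0 Om b) /\
       (forall (c : CC) a, d0 Om (c *: a) = c *: d0 Om a) /\
       (forall w v, d1 Om (w + v) = d1 Om w + d1 Om v) /\
       (forall (c : CC) w, d1 Om (c *: w) = c *: d1 Om w)),
      ((forall a b, d0 Om (a * b) = r1 Om (d0 Om a) b + l1 Om a (d0 Om b)) /\
       (forall a w, d1 Om (l1 Om a w) = wedge Om (d0 Om a) w + l2 Om a (d1 Om w)) /\
       (forall a w, d1 Om (r1 Om w a) = r2 Om (d1 Om w) a - wedge Om w (d0 Om a)) /\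
       (forall a, d1 Om (d0 Om a) = 0))
    &
      ((forall w : O1 Om, exists k (a b : 'I_k -> A),
          w = \sum_(i < k) r1 Om (d0 Om (a i)) (b i)) /\
       (forall x : O2 Om, exists k (a0 a1 b : 'I_k -> A),
          x = \sum_(i < k) r2 Om (wedge Om (d0 Om (a0 i)) (d0 Om (a1 i))) (b i)))].

(* E = O1 is a finitely generated projective right A-module, presented as
   E ~= p(A^n) with p = iota o pi an idempotent:  iota : E -> A^n and
   pi : A^n -> E right A-linear with pi o iota = id. *)
Definition fgp_presentation (Om : calc2) (n : nat)
    (iota : O1 Om -> 'I_n -> A) (pi : ('I_n -> A) -> O1 Om) : Prop :=
  [/\ forall w v, iota (w + v) = (fun j => iota w j + iota v j),
      forall w a, iota (r1 Om w a) = (fun j => iota w j * a),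
      forall x y, pi (fun j => x j + y j) = pi x + pi y,
      forall x a, pi (fun j => x j * a) = r1 Om (pi x) a
    & forall w, pi (iota w) = w].

Definition Phi (Om : calc2) (n : nat) (pi : ('I_n -> A) -> O1 Om) (j : 'I_n)
  : O1 Om := pi (fun k => if k == j then 1 else 0).

(* (T, tens) is the tensor product E (x)_A E of A-bimodules, with its
   bimodule structure (lT, rT), characterised by its universal property. *)
Definition is_tensor_EE (Om : calc2) (T : lmodType CC)
    (lT : A -> T -> T) (rT : T -> A -> T) (tens : O1 Om -> O1 Om -> T) : Prop :=
  [/\ is_bimodule lT rT,
      (forall w w' v, tens (w + w') v = tens w v + tens w' v) /\
      (forall w v v', tens w (v + v') = tens w v + tens w v') /\
      (forall (c : CC) w v, tens (c *: w) v = c *: tens w v) /\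
      (forall a w v, tens (r1 Om w a) v = tens w (l1 Om a v)),
      (forall a w v, lT a (tens w v) = tens (l1 Om a w) v) /\
      (forall a w v, rT (tens w v) a = tens w (r1 Om v a)),
      (forall (M : zmodType) (f : O1 Om -> O1 Om -> M),
         (forall w w' v, f (w + w') v = f w v + f w' v) ->
         (forall w v v', f w (v + v') = f w v + f w v') ->
         (forall a w v, f (r1 Om w a) v = f w (l1 Om a v)) ->
         exists g : T -> M, (forall t s, g (t + s) = g t + g s) /\
                            (forall w v, g (tens w v) = f w v))
    &
      (forall (M : zmodType) (g1 g2 : T -> M),
         (forall t s, g1 (t + s) = g1 t + g1 s) ->
         (forall t s, g2 (t + s) = g2 t + g2 s) ->
         (forall w v, g1 (tens w v) = g2 (tens w v)) ->
         forall t, g1 t = g2 t)].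

(* Hypothesis (1): E = Z(E) (x)_{Z(A)} A, i.e. E together with the map
   (z, a) |-> z a on Z(E) x A satisfies the universal property of the
   tensor product of the Z(A)-modules Z(E) and A over Z(A). *)
Definition centrally_generated (Om : calc2) : Prop :=
  (forall (M : zmodType) (f : O1 Om -> A -> M),
     (forall z z' a, central (l1 Om) (r1 Om) z -> central (l1 Om) (r1 Om) z' ->
        f (z + z') a = f z a + f z' a) ->
     (forall z a a', central (l1 Om) (r1 Om) z -> f z (a + a') = f z a + f z a') ->
     (forall z c a, central (l1 Om) (r1 Om) z -> centralA c ->
        f (r1 Om z c) a = f z (c * a)) ->
     exists g : O1 Om -> M, (forall w v, g (w + v) = g w + g v) /\
       (forall z a, central (l1 Om) (r1 Om) z -> g (r1 Om z a) = f z a)) /\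
  (forall (M : zmodType) (g1 g2 : O1 Om -> M),
     (forall w v, g1 (w + v) = g1 w + g1 v) ->
     (forall w v, g2 (w + v) = g2 w + g2 v) ->
     (forall z a, central (l1 Om) (r1 Om) z -> g1 (r1 Om z a) = g2 (r1 Om z a)) ->
     forall w, g1 w = g2 w).

(* Hypothesis (2): E (x)_A E = ker(wedge) (+) F, F a right submodule, and
   Q = wedge|_F : F -> Omega^2 a (right A-linear) isomorphism, with inverse
   Qinv : Omega^2 -> F (F is given as a subset of T). *)
Definition wedge_splitting (Om : calc2) (T : lmodType CC) (rT : T -> A -> T)
    (wedgeT : T -> O2 Om) (F : T -> Prop) (Qinv : O2 Om -> T) : Prop :=
  [/\ F 0 /\ (forall t s, F t -> F s -> F (t + s)) /\
        (forall (c : CC) t, F t -> F (c *: t)) /\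
        (forall t a, F t -> F (rT t a)),
      (forall t, F t -> wedgeT t = 0 -> t = 0),
      (forall t, exists k f, wedgeT k = 0 /\ F f /\ t = k + f),
      (forall t a, F t -> wedgeT (rT t a) = r2 Om (wedgeT t) a)
    & forall x, F (Qinv x) /\ wedgeT (Qinv x) = x].

(* P_sym : the idempotent with image ker(wedge) and kernel F. *)
Definition Psym (Om : calc2) (T : lmodType CC) (wedgeT : T -> O2 Om)
    (Qinv : O2 Om -> T) (t : T) : T := t - Qinv (wedgeT t).

Definition sigma (Om : calc2) (T : lmodType CC) (wedgeT : T -> O2 Om)
    (Qinv : O2 Om -> T) (t : T) : T := 2%:R *: Psym wedgeT Qinv t - t.

(* The Grassmann connection nabla^Gr(sum_j Phi_j a_j) = sum_j Phi_j (x) d a_j,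
   where (a_j) = iota(w) are the coordinates of w in p(A^n). *)
Definition nablaGr (Om : calc2) (T : lmodType CC) (tens : O1 Om -> O1 Om -> T)
    (n : nat) (iota : O1 Om -> 'I_n -> A) (pi : ('I_n -> A) -> O1 Om)
    (w : O1 Om) : T :=
  \sum_(j < n) tens (Phi pi j) (d0 Om (iota w j)).

Definition nabla0 (Om : calc2) (T : lmodType CC) (tens : O1 Om -> O1 Om -> T)
    (wedgeT : T -> O2 Om) (Qinv : O2 Om -> T)
    (n : nat) (iota : O1 Om -> 'I_n -> A) (pi : ('I_n -> A) -> O1 Om)
    (w : O1 Om) : T :=
  nablaGr tens iota pi w - Qinv (wedgeT (nablaGr tens iota pi w) + d1 Om w).

End Defs.

Arguments l1 {A} c _ _. Arguments r1 {A} c _ _.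
Arguments l2 {A} c _ _. Arguments r2 {A} c _ _.
Arguments d0 {A} c _. Arguments d1 {A} c _.
Arguments wedge {A} c _ _.

From mathcomp Require Import all_boot all_algebra.
From mathcomp Require Import complex Rstruct.
Local Open Scope ring_scope.
Import GRing.Theory Num.Theory.

(* For central w, hypothesis (3) and wedge o sigma = - wedge give
   z /\ w = - w /\ z for central z, and by (1) this extends to every
   one-form.  Comparing the Leibniz rules for d(a w) and d(w a) = d(a w)
   then gives a dw = dw a.
   Since sigma t = t - 2 Q^-1(wedge t) and wedge o nabla_0 = - d, we get
   (1 - sigma) nabla_0 w = - 2 Q^-1(dw), whatever the presentation of E.
   The elements of F are the solutions of sigma t = - t, and (1), (3) make
   sigma left A-linear; so for central x, a Q^-1(x) lies in F and equals
   Q^-1(a x) = Q^-1(x a) = Q^-1(x) a. *)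

Section Additive.
Context {U V : zmodType} {f : U -> V}.
Hypothesis fD : {morph f : x y / x + y}.

Lemma additive0 : f 0 = 0.
Proof. by apply: (@addrI _ (f 0)); rewrite -fD !addr0. Qed.

Lemma additiveN x : f (- x) = - f x.
Proof. by apply: (@addrI _ (f x)); rewrite -fD !subrr additive0. Qed.

Lemma additiveB x y : f (x - y) = f x - f y.
Proof. by rewrite fD additiveN. Qed.

End Additive.

Section Bimodule.
Context {A : algType CC} {M : lmodType CC} {la : A -> M -> M} {ra : M -> A -> M}.
Hypothesis hM : is_bimodule la ra.

Lemma bimodule_lD a : {morph la a : m n / m + n}.
Proof. by case: hM => _ _ [_ [+ _]] _ _; apply. Qed.

Lemma bimodule_rD a : {morph ra ^~ a : m n / m + n}.
Proof. by case: hM => _ _ [_ [_ [_ +]]] _ _; apply. Qed.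

Lemma bimodule_lZ (c : CC) a m : la a (c *: m) = c *: la a m.
Proof. by case: hM => _ _ _ [_ [+ _]] _; apply. Qed.

Lemma bimodule_rZ (c : CC) a m : ra (c *: m) a = c *: ra m a.
Proof. by case: hM => _ _ _ [_ [_ [_ +]]] _; apply. Qed.

Lemma bimodule_rM a b m : ra m (a * b) = ra (ra m a) b.
Proof. by case: hM => _ [_ +] _ _ _; apply. Qed.

Lemma bimodule_lr a b m : la a (ra m b) = ra (la a m) b.
Proof. by case: hM. Qed.

Lemma centralZ (c : CC) m : central la ra m -> central la ra (c *: m).
Proof. by move=> cm a; rewrite bimodule_lZ bimodule_rZ cm. Qed.

End Bimodule.

Section Calculus.
Context {A : algType CC} {Om : calc2 A}.
Hypothesis hOm : is_calc2 Om.

Local Notation E := (O1 Om).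
Local Notation central1 := (central (l1 Om) (r1 Om)).
Local Notation central2 := (central (l2 Om) (r2 Om)).

Lemma calc2_bimodule2 : is_bimodule (l2 Om) (r2 Om).
Proof. by case: hOm => [[]]. Qed.

Lemma wedgeDl v : {morph wedge Om ^~ v : w w' / w + w'}.
Proof. by case: hOm => _ [+ _] _ _ _ w w'; apply. Qed.

Lemma wedgeDr w : {morph wedge Om w : v v' / v + v'}.
Proof. by case: hOm => _ [_ [+ _]] _ _ _; apply. Qed.

Lemma wedge_l1 a w v : wedge Om (l1 Om a w) v = l2 Om a (wedge Om w v).
Proof. by case: hOm => _ [_ [_ [_ [_ [+ _]]]]] _ _ _; apply. Qed.

Lemma wedge_r1l a w v : wedge Om (r1 Om w a) v = wedge Om w (l1 Om a v).
Proof. by case: hOm => _ [_ [_ [_ [_ [_ [+ _]]]]]] _ _ _; apply. Qed.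

Lemma wedge_r1r a w v : wedge Om w (r1 Om v a) = r2 Om (wedge Om w v) a.
Proof. by case: hOm => _ [_ [_ [_ [_ [_ [_ +]]]]]] _ _ _; apply. Qed.

Lemma l2D a : {morph l2 Om a : x y / x + y}.
Proof. exact: (bimodule_lD calc2_bimodule2 a). Qed.

Lemma r2D a : {morph r2 Om ^~ a : x y / x + y}.
Proof. exact: (bimodule_rD calc2_bimodule2 a). Qed.

Lemma d1_l1 a w : d1 Om (l1 Om a w) = wedge Om (d0 Om a) w + l2 Om a (d1 Om w).
Proof. by case: hOm => _ _ _ [_ [+ _]] _; apply. Qed.

Lemma d1_r1 a w : d1 Om (r1 Om w a) = r2 Om (d1 Om w) a - wedge Om w (d0 Om a).
Proof. by case: hOm => _ _ _ [_ [_ [+ _]]] _; apply. Qed.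

Lemma d1_central w : central1 w ->
  (forall v, wedge Om v w = - wedge Om w v) -> central2 (d1 Om w).
Proof.
move=> cw anti a; have := d1_l1 a w; rewrite cw d1_r1 anti => Leibniz.
by apply: (addrI (- wedge Om w (d0 Om a))); rewrite -Leibniz addrC.
Qed.

Hypothesis h1 : centrally_generated Om.

Lemma central_ext (M : zmodType) (g1 g2 : E -> M) :
    {morph g1 : w v / w + v} -> {morph g2 : w v / w + v} ->
    (forall z a, central1 z -> g1 (r1 Om z a) = g2 (r1 Om z a)) ->
  forall w, g1 w = g2 w.
Proof. by case: h1 => _; apply. Qed.

Lemma wedge_anticomm w : central1 w ->
    (forall z, central1 z -> wedge Om w z = - wedge Om z w) ->
  forall v, wedge Om v w = - wedge Om w v.
Proof.
move=> cw anti v; apply/eqP; rewrite -addr_eq0; apply/eqP.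
apply: (@central_ext _ (fun v => wedge Om v w + wedge Om w v) (fun=> 0)).
- by move=> x y; rewrite wedgeDl wedgeDr addrACA.
- by move=> *; rewrite addr0.
move=> z a cz; rewrite wedge_r1l cw !wedge_r1r -r2D anti // subrr.
exact: additive0 (r2D a).
Qed.

Section Tensor.
Context {T : lmodType CC} {lT : A -> T -> T} {rT : T -> A -> T} {tens : E -> E -> T}.
Hypothesis hT : is_tensor_EE lT rT tens.

Local Notation centralT := (central lT rT).

Lemma tensor_bimodule : is_bimodule lT rT.
Proof. by case: hT. Qed.

Lemma lTD a : {morph lT a : t s / t + s}.
Proof. exact: (bimodule_lD tensor_bimodule a). Qed.

Lemma rTD a : {morph rT ^~ a : t s / t + s}.
Proof. exact: (bimodule_rD tensor_bimodule a). Qed.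

Lemma lT_rT a b t : lT a (rT t b) = rT (lT a t) b.
Proof. exact: (bimodule_lr tensor_bimodule). Qed.

Lemma rTM a b t : rT t (a * b) = rT (rT t a) b.
Proof. exact: (bimodule_rM tensor_bimodule). Qed.

Lemma tensDl v : {morph tens ^~ v : w w' / w + w'}.
Proof. by case: hT => _ [+ _] _ _ _ w w'; apply. Qed.

Lemma tensDr w : {morph tens w : v v' / v + v'}.
Proof. by case: hT => _ [_ [+ _]] _ _ _ v v'; apply. Qed.

Lemma tens_r1l a w v : tens (r1 Om w a) v = tens w (l1 Om a v).
Proof. by case: hT => _ [_ [_ [_ +]]] _ _ _; apply. Qed.

Lemma lT_tens a w v : lT a (tens w v) = tens (l1 Om a w) v.
Proof. by case: hT => _ _ [+ _] _ _; apply. Qed.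

Lemma rT_tens a w v : rT (tens w v) a = tens w (r1 Om v a).
Proof. by case: hT => _ _ [_ +] _ _; apply. Qed.

Lemma tens_ext (M : zmodType) (g1 g2 : T -> M) :
    {morph g1 : t s / t + s} -> {morph g2 : t s / t + s} ->
    (forall w v, g1 (tens w v) = g2 (tens w v)) ->
  forall t, g1 t = g2 t.
Proof. by case: hT => _ _ _ _; apply. Qed.

Lemma central_tens z z' : central1 z -> central1 z' -> centralT (tens z z').
Proof. by move=> cz cz' a; rewrite lT_tens cz tens_r1l cz' rT_tens. Qed.

(* Hypothesis (1), applied to each tensor factor. *)
Lemma tens_central_ext (M : zmodType) (g1 g2 : T -> M) :
    {morph g1 : t s / t + s} -> {morph g2 : t s / t + s} ->
    (forall z z' b, central1 z -> central1 z' ->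
       g1 (rT (tens z z') b) = g2 (rT (tens z z') b)) ->
  forall t, g1 t = g2 t.
Proof.
move=> g1D g2D eq_g; apply: tens_ext => // w v.
apply: (@central_ext _ (fun w => g1 (tens w v)) (fun w => g2 (tens w v))).
- by move=> x y; rewrite tensDl g1D.
- by move=> x y; rewrite tensDl g2D.
move=> z a cz; rewrite !tens_r1l.
apply: (@central_ext _ (fun v => g1 (tens z v)) (fun v => g2 (tens z v))).
- by move=> x y; rewrite tensDr g1D.
- by move=> x y; rewrite tensDr g2D.
by move=> z' b cz'; rewrite -rT_tens eq_g.
Qed.

Context {wedgeT : T -> O2 Om}.
Hypothesis wedgeTD : {morph wedgeT : t s / t + s}.
Hypothesis wedgeT_tens : forall w v, wedgeT (tens w v) = wedge Om w v.

Lemma wedgeT_lT a t : wedgeT (lT a t) = l2 Om a (wedgeT t).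
Proof.
move: t; apply: (@tens_ext _ (fun t => wedgeT (lT a t)) (fun t => l2 Om a (wedgeT t))).
- by move=> t s; rewrite lTD wedgeTD.
- by move=> t s; rewrite wedgeTD l2D.
by move=> w v; rewrite lT_tens !wedgeT_tens wedge_l1.
Qed.

Lemma wedgeT_rT a t : wedgeT (rT t a) = r2 Om (wedgeT t) a.
Proof.
move: t; apply: (@tens_ext _ (fun t => wedgeT (rT t a)) (fun t => r2 Om (wedgeT t) a)).
- by move=> t s; rewrite rTD wedgeTD.
- by move=> t s; rewrite wedgeTD r2D.
by move=> w v; rewrite rT_tens !wedgeT_tens wedge_r1r.
Qed.

Context {F : T -> Prop} {Qinv : O2 Om -> T}.
Hypothesis h2 : wedge_splitting rT wedgeT F Qinv.

Local Notation sigma := (sigma wedgeT Qinv).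

Lemma wedgeT_Qinv x : wedgeT (Qinv x) = x.
Proof. by case: h2 => _ _ _ _ /(_ x) []. Qed.

Lemma F_Qinv x : F (Qinv x).
Proof. by case: h2 => _ _ _ _ /(_ x) []. Qed.

Lemma F_wedgeT_inj t s : F t -> F s -> wedgeT t = wedgeT s -> t = s.
Proof.
case: h2 => [[_ [FD [FZ _]]] Finj _ _ _] Ft Fs eq_ts.
apply/eqP; rewrite -subr_eq0; apply/eqP; apply: Finj.
  by apply: FD => //; rewrite -scaleN1r; apply: FZ.
by rewrite (additiveB wedgeTD) eq_ts subrr.
Qed.

Lemma QinvD : {morph Qinv : x y / x + y}.
Proof.
case: h2 => [[_ [FD _]] _ _ _ _] x y; apply: F_wedgeT_inj.
- exact: F_Qinv.
- by apply: FD; apply: F_Qinv.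
by rewrite wedgeTD !wedgeT_Qinv.
Qed.

Lemma Qinv_r2 x a : Qinv (r2 Om x a) = rT (Qinv x) a.
Proof.
case: h2 => [[_ [_ [_ Fr]]] _ _ _ _]; apply: F_wedgeT_inj.
- exact: F_Qinv.
- by apply: Fr; apply: F_Qinv.
by rewrite wedgeT_rT !wedgeT_Qinv.
Qed.

Lemma sigmaE t : sigma t = t - 2%:R *: Qinv (wedgeT t).
Proof.
by rewrite /sigma /Psym scalerBr [2%:R *: t]scaler_nat mulr2n addrAC addrK.
Qed.

Lemma subr_sigma t : t - sigma t = 2%:R *: Qinv (wedgeT t).
Proof. by rewrite sigmaE subKr. Qed.

Lemma wedgeT_sigma t : wedgeT (sigma t) = - wedgeT t.
Proof.
rewrite sigmaE (additiveB wedgeTD) scaler_nat mulr2n wedgeTD wedgeT_Qinv.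
by rewrite opprD addrA subrr add0r.
Qed.

Lemma sigmaD : {morph sigma : t s / t + s}.
Proof. by move=> t s; rewrite !sigmaE wedgeTD QinvD scalerDr opprD addrACA. Qed.

Lemma sigma_rT a t : sigma (rT t a) = rT (sigma t) a.
Proof.
rewrite !sigmaE (additiveB (rTD a)) (bimodule_rZ tensor_bimodule).
by rewrite wedgeT_rT Qinv_r2.
Qed.

Lemma sigma_eqN t : sigma t = - t -> t = Qinv (wedgeT t).
Proof.
rewrite sigmaE => eq_t; apply: (@scalerI _ _ (2%:R : CC)).
  by rewrite pnatr_eq0.
by rewrite scaler_nat mulr2n -{2}(opprK t) -eq_t opprB addrC subrK.
Qed.

Hypothesis h3 : forall w v, central1 w -> central1 v -> sigma (tens w v) = tens v w.

Lemma wedge_anticomm_central w z : central1 w -> central1 z ->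
  wedge Om w z = - wedge Om z w.
Proof. by move=> cw cz; rewrite -!wedgeT_tens -h3 // wedgeT_sigma. Qed.

(* F need not be a left submodule; left linearity comes from (3): on central
   tensors sigma is the flip, which commutes with the left action. *)
Lemma sigma_lT a t : sigma (lT a t) = lT a (sigma t).
Proof.
move: t; apply: (@tens_central_ext _ (fun t => sigma (lT a t)) (fun t => lT a (sigma t))).
- by move=> t s; rewrite lTD sigmaD.
- by move=> t s; rewrite sigmaD lTD.
move=> z z' b cz cz'.
by rewrite lT_rT central_tens // -rTM !sigma_rT h3 // lT_rT central_tens // -rTM.
Qed.

Lemma Qinv_central x : central2 x -> centralT (Qinv x).
Proof.
move=> cx a; set q := Qinv x.
have sigma_q : sigma q = - q.
  by rewrite sigmaE wedgeT_Qinv scaler_nat mulr2n opprD addNKr.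
have -> : lT a q = Qinv (wedgeT (lT a q)).
  by apply: sigma_eqN; rewrite sigma_lT sigma_q (additiveN (lTD a)).
by rewrite wedgeT_lT wedgeT_Qinv cx Qinv_r2.
Qed.

Lemma wedgeT_nabla0 n (iota : E -> 'I_n -> A) (pi : ('I_n -> A) -> E) w :
  wedgeT (nabla0 tens wedgeT Qinv iota pi w) = - d1 Om w.
Proof. by rewrite /nabla0 (additiveB wedgeTD) wedgeT_Qinv opprD addNKr. Qed.

End Tensor.
End Calculus.

Theorem lemma6p4
  (A : algType CC) (Om : calc2 A) (hOm : is_calc2 Om)
  (n : nat) (iota : O1 Om -> 'I_n -> A) (pi : ('I_n -> A) -> O1 Om)
  (hfgp : fgp_presentation iota pi)
  (T : lmodType CC) (lT : A -> T -> T) (rT : T -> A -> T)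
  (tens : O1 Om -> O1 Om -> T) (hT : is_tensor_EE lT rT tens)
  (wedgeT : T -> O2 Om)
  (hwT : (forall t s, wedgeT (t + s) = wedgeT t + wedgeT s) /\
         (forall w v, wedgeT (tens w v) = wedge Om w v))
  (h1 : centrally_generated Om)
  (F : T -> Prop) (Qinv : O2 Om -> T)
  (h2 : wedge_splitting rT wedgeT F Qinv)
  (h3 : forall w v, central (l1 Om) (r1 Om) w ->
          central (l1 Om) (r1 Om) v ->
          sigma wedgeT Qinv (tens w v) = tens v w) :
  forall w : O1 Om, central (l1 Om) (r1 Om) w ->
    central (l2 Om) (r2 Om) (d1 Om w) /\
    central lT rT
      (nabla0 tens wedgeT Qinv iota pi w
       - sigma wedgeT Qinv (nabla0 tens wedgeT Qinv iota pi w)).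
Proof.
case: hwT => wedgeTD wedgeT_tens w cw.
have anti_w : forall v, wedge Om v w = - wedge Om w v.
  move=> v; apply: (wedge_anticomm hOm h1 _ cw) => z cz.
  exact: (wedge_anticomm_central wedgeTD wedgeT_tens h2 h3).
have central_dw := d1_central hOm _ cw anti_w.
split => //.
rewrite subr_sigma (wedgeT_nabla0 wedgeTD h2) (additiveN (QinvD wedgeTD h2)).
rewrite scalerN -scaleNr; apply: (centralZ (tensor_bimodule hT)).
exact: (Qinv_central hOm h1 hT wedgeTD wedgeT_tens h2 h3).
Qed.
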